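(* Let $m,n\in\mathbb N$. The truncation map $\mathsf{Tr}_{n+1,n}:\mathcal E^{m+n+1}_+\to\mathcal E^{m+n}_+$ commutes with the bar involutions.
   Context: $\mathcal U=U_q(\mathfrak{sl}(\infty))$ over $\mathbb Q(q)$ generated by $E_a,F_a,K_{a,a+1}^{\pm1}$ ($a\in\mathbb Z$), comultiplication $\Delta(E_a)=1\otimes E_a+E_a\otimes K_{a,a+1}^{-1}$, $\Delta(F_a)=F_a\otimes1+K_{a,a+1}\otimes F_a$; bar map $\bar q=q^{-1}$ fixing $E_a,F_a$, inverting $K_{a,a+1}$. $\Lambda^k\mathbb V$: basis $v_{a_1}\wedge\cdots\wedge v_{a_k}$ ($a_1>\cdots>a_k$); for index set $S$, $F_a$ replaces $a$ by $a+1$ if $a\in S,a+1\notin S$ (else $0$), $E_a$ replaces $a+1$ by $a$ if $a+1\in S,a\notin S$ (else $0$), $K_{a,a+1}$ acts by $q^{[a\in S]-[a+1\in S]}$. For $k\in\mathbb N$: $I(m|k)=\{-m,\dots,-1\}\cup\{1,\dots,k\}$; $\mathbb Z^{m+k}_+=\{f:f(-m)>\cdots>f(-1),\ f(1)>\cdots>f(k)\}$, $\mathbb Z^{m+k}_{++}=\{f\in\mathbb Z^{m+k}_+:f(k)\ge1-k\}$. $\mathcal E^{m+k}=\Lambda^m\mathbb V\otimes\Lambda^k\mathbb V$ with basis $\mathcal K_f=v_{f(-m)}\wedge\cdots\wedge v_{f(-1)}\otimes v_{f(1)}\wedge\cdots\wedge v_{f(k)}$, $f\in\mathbb Z^{m+k}_+$;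 $\mathcal E^{m+k}_+$ is the span of $\mathcal K_f$, $f\in\mathbb Z^{m+k}_{++}$. Bruhat ordering: transitive closure of $f<f\cdot\tau_{ij}$ for $i<j$ with $f(i)<f(j)$. The bar involution on $\mathcal E^{m+k}$ is the unique anti-linear involution fixing $\mathcal K_f$ for $f$ minimal in $\mathbb Z^{m+k}_+$, with $\overline{Xu}=\bar X\bar u$ for $X\in\mathcal U$, and $\overline{\mathcal K_f}\in\mathcal K_f+\sum_{g<f}\mathbb Z[q,q^{-1}]\mathcal K_g$. $\mathsf{Tr}_{n+1,n}$ is the linear map $\mathcal K_f\mapsto\mathcal K_{f^{(n)}}$ if $f(n+1)=-n$ and $\mathcal K_f\mapsto0$ otherwise, $f^{(n)}$ the restriction to $I(m|n)$. *)

From HB Require Import structures.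
From mathcomp Require Import all_boot all_order all_algebra.
From mathcomp Require Import finmap.
From mathcomp Require Import monalg.
From Stdlib Require Import Relations.Relation_Operators.

Set Implicit Arguments.
Unset Strict Implicit.
Unset Printing Implicit Defensive.

Import Order.TTheory GRing.Theory Num.Theory.
Local Open Scope ring_scope.

Definition Qq : fieldType := {fraction {poly rat}}.

Definition qq : Qq := FracField.tofrac ('X : {poly rat}).

Definition ev_qinv (p : {poly rat}) : Qq :=
  (map_poly (fun c : rat => FracField.tofrac (c%:P)) p).[qq^-1].

Definition barQ (x : Qq) : Qq :=
  let r := repr x in ev_qinv (frac r).1 / ev_qinv (frac r).2.

Definition laurent (c : Qq) : Prop :=
  exists (p : {poly int}) (k : nat),
    c = (map_poly (fun z : int => z%:~R : Qq) p).[qq] / qq ^+ k.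

(* An f in Z^{m+k}_+ is encoded as the pair (s, t) with
   s = [f(-m); ...; f(-1)] and t = [f(1); ...; f(k)], both strictly
   decreasing.  K_f = v_{f(-m)} /\ ... /\ v_{f(-1)} (x) v_{f(1)} /\ ... /\ v_{f(k)}. *)
Definition sdec (s : seq int) : bool := sorted (fun a b : int => b < a) s.

Definition wf (m k : nat) (st : seq int * seq int) : bool :=
  [&& size st.1 == m, size st.2 == k, sdec st.1 & sdec st.2].

Definition idx (m k : nat) := {st : seq int * seq int | wf m k st}.

(* E^{m+k} = Lambda^m V (x) Lambda^k V : free Q(q)-module on Z^{m+k}_+ *)
Definition Esp (m k : nat) := {malg Qq[idx m k]}.

Definition Kb (m k : nat) (f : idx m k) : Esp m k := << f >>.

(* basis vector for a pair of sequences (zero if not a valid index;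
   only used on valid indices) *)
Definition mkb (m k : nat) (st : seq int * seq int) : Esp m k :=
  if @insub _ (wf m k) (idx m k) st is Some f then << f >> else 0.

Definition lin_ext (m k m' k' : nat) (b : idx m k -> Esp m' k') (u : Esp m k)
  : Esp m' k' :=
  \sum_(i <- msupp u) u@_i *: b i.

(* Action of U_q(sl(oo)) on Lambda V (index set S given as a sequence). *)
Definition F_seq (a : int) (s : seq int) : option (seq int) :=
  if (a \in s) && (a + 1 \notin s)
  then Some [seq (if x == a then a + 1 else x) | x <- s] else None.

Definition E_seq (a : int) (s : seq int) : option (seq int) :=
  if (a + 1 \in s) && (a \notin s)
  then Some [seq (if x == a + 1 then a else x) | x <- s] else None.

(* K_{a,a+1} acts on v_S by q^(kexp a S) *)
Definition kexp (a : int) (s : seq int) : int :=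
  ((a \in s) : nat)%:Z - ((a + 1 \in s) : nat)%:Z.

(* Action on E^{m+k} via the comultiplication
   Delta(E_a) = 1 (x) E_a + E_a (x) K^{-1},  Delta(F_a) = F_a (x) 1 + K (x) F_a. *)
Definition actF_b (m k : nat) (a : int) (f : idx m k) : Esp m k :=
  let: (s, t) := val f in
  (if F_seq a s is Some s' then mkb m k (s', t) else 0)
  + (if F_seq a t is Some t' then qq ^ (kexp a s) *: mkb m k (s, t') else 0).

Definition actE_b (m k : nat) (a : int) (f : idx m k) : Esp m k :=
  let: (s, t) := val f in
  (if E_seq a t is Some t' then mkb m k (s, t') else 0)
  + (if E_seq a s is Some s' then qq ^ (- kexp a t) *: mkb m k (s', t) else 0).

Definition actK_b (m k : nat) (e : int) (a : int) (f : idx m k) : Esp m k :=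
  let: (s, t) := val f in qq ^ (e * (kexp a s + kexp a t)) *: Kb f.

Definition actF m k a := lin_ext (@actF_b m k a).
Definition actE m k a := lin_ext (@actE_b m k a).
(* actK m k 1 a = K_{a,a+1},  actK m k (-1) a = K_{a,a+1}^{-1} *)
Definition actK m k e a := lin_ext (@actK_b m k e a).

(* Bruhat ordering: on functions I(m|k) -> Z, listed in the order
   -m < ... < -1 < 1 < ... < k; transitive closure of
   f < f.tau_{ij} for i < j with f(i) < f(j). *)
Definition swap_seq (w : seq int) (i j : nat) : seq int :=
  mkseq (fun l => if l == i then nth 0 w j
                  else if l == j then nth 0 w i else nth 0 w l) (size w).

Definition bruhat_step (w w' : seq int) : Prop :=
  exists i j : nat, [/\ (i < j)%N, (j < size w)%N, nth 0 w i < nth 0 w j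
                     & w' = swap_seq w i j].

Definition as_fun (m k : nat) (f : idx m k) : seq int := (val f).1 ++ (val f).2.

Definition bruhat_lt (m k : nat) (g f : idx m k) : Prop :=
  clos_trans (seq int) bruhat_step (as_fun g) (as_fun f).

Definition is_bar_involution (m k : nat) (psi : Esp m k -> Esp m k) : Prop :=
      (forall (c : Qq) (u v : Esp m k), psi (c *: u + v) = barQ c *: psi u + psi v) /\
      (forall u, psi (psi u) = u) /\
      (* compatible with the bar map of U: bar E_a = E_a, bar F_a = F_a,
         bar K_{a,a+1}^{+-1} = K_{a,a+1}^{-+1}; by anti-linearity this is
         equivalent to psi (X u) = bar X (psi u) for all X in U *)
      (forall a u, psi (actE a u) = actE a (psi u)) /\
      (forall a u, psi (actF a u) = actF a (psi u)) /\
      (forall e a u, (e == 1) || (e == -1) -> psi (actK e a u) = actK (- e) a (psi u)) /\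
      (forall f : idx m k, (forall g : idx m k, ~ bruhat_lt g f) -> psi (Kb f) = Kb f) /\
      (forall f g : idx m k,
         laurent ((psi (Kb f))@_g) /\
         (g = f -> (psi (Kb f))@_g = 1) /\
         (g <> f -> (psi (Kb f))@_g != 0 -> bruhat_lt g f)).

Definition plus_idx (m k : nat) (f : idx m k) : bool :=
  (k == 0)%N || (1 - k%:Z <= nth 0 (val f).2 k.-1).

Definition in_Eplus (m k : nat) (u : Esp m k) : Prop :=
  forall f, f \in msupp u -> plus_idx f.

Definition tr_b (m n : nat) (f : idx m n.+1) : Esp m n :=
  if nth 0 (val f).2 n == - n%:Z then mkb m n ((val f).1, take n (val f).2) else 0.

Definition Tr (m n : nat) : Esp m n.+1 -> Esp m n := lin_ext (@tr_b m n).

(* Both sides are anti-linear in u, so it suffices to consider a basis vector K_f with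
   f(n+1) >= -n.  Going up in the Bruhat order can only decrease the last entry, so if
   f(n+1) > -n then every K_g occurring in psi1 K_f has g(n+1) > -n and both sides
   vanish.  Otherwise f = (s, t, -n), and we argue by induction on the weight
   sum_{x in s, z in t} max(x - z, 0).  If some y in t with y + 1 not in t lies below
   some x in s, then K_(s,t) = E_y K_(s,t') - c K_(s',t') with t' = t[y := y + 1] and
   s' = s[y + 1 := y], the same identity holds after appending -n, both (s,t') and
   (s',t') have smaller weight, and E_y (y > -n) commutes with Tr and with both bar
   involutions.  If there is no such y, every entry of s outside t lies below all of t;
   then K_(s,t) is Bruhat-minimal, hence bar-invariant, and the only K_g in
   psi1 K_(s,t,-n) surviving truncation is g = (s, t, -n) itself. *)
From HB Require Import structures.
From mathcomp Require Import all_boot all_order all_algebra.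
From mathcomp Require Import finmap monalg zify.
From Stdlib Require Import Relations.Relation_Operators.
Import Order.TTheory GRing.Theory Num.Theory.
Set Implicit Arguments.
Unset Strict Implicit.
Unset Printing Implicit Defensive.

Local Open Scope ring_scope.

(** * Bruhat order on integer sequences *)

Lemma size_swap_seq w i j : size (swap_seq w i j) = size w.
Proof. exact: size_mkseq. Qed.

Lemma nth_swap_seq w i j l : (l < size w)%N ->
  nth 0 (swap_seq w i j) l =
  if l == i then nth 0 w j else if l == j then nth 0 w i else nth 0 w l.
Proof. exact: nth_mkseq. Qed.

(* A prefix of the (i j)-swap of w is a prefix of w in which, exactly when
   i < p <= j, the entry w_i has been replaced by w_j. *)
Lemma count_take_swap_seq (P : pred int) w i j p : (p <= size w)%N ->
  (i < j)%N -> (j < size w)%N ->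
  (count P (take p (swap_seq w i j)) + (if (i < p <= j)%N then P (nth 0%R w i) else false)
   = count P (take p w) + (if (i < p <= j)%N then P (nth 0%R w j) else false))%N.
Proof.
elim: p => [|p IH] lt_p ij jw; first by rewrite !take0.
rewrite (take_nth 0) ?size_swap_seq // (take_nth 0) //.
rewrite -!cats1 !count_cat /= !addn0 nth_swap_seq //.
move: {IH}(IH (ltnW lt_p) ij jw).
case: eqP => [->|ne_pi]; last case: eqP => [->|ne_pj];
move: (P (nth 0 w i)) (P (nth 0 w j)) (P (nth 0 w p)) => a b c;
by case: ifP => c1; case: ifP => c2; rewrite ?addn0; lia.
Qed.

Lemma bruhat_step_perm w w' : bruhat_step w w' -> perm_eq w w'.
Proof.
case=> i [j [ij jw _ ->]]; apply/permP => P.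
have := count_take_swap_seq P (leqnn (size w)) ij jw.
rewrite take_size -[X in take X _](size_swap_seq w i j) take_size.
by rewrite [(size w <= j)%N]leqNgt jw andbF !addn0 => ->.
Qed.

Lemma bruhat_step_count_take w w' (c : int) p : bruhat_step w w' ->
  (count (>= c) (take p w) <= count (>= c) (take p w'))%N.
Proof.
move=> st; have pe := bruhat_step_perm st; case: st => i [j [ij jw lt_ij ew']].
have [le_p|lt_p] := leqP p (size w); last first.
  by rewrite !take_oversize -?(perm_size pe) ?(ltnW lt_p) // (permP pe).
have := count_take_swap_seq (>= c) le_p ij jw; rewrite -ew'.
have : (c <= nth 0 w i) ==> (c <= nth 0 w j).
  by apply/implyP => /le_trans; apply; apply: ltW.
move: (c <= nth 0 w i) (c <= nth 0 w j) => a b.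
by case: ifP => _; case: a; case: b => //= _; lia.
Qed.

Lemma bruhat_step_last w w' : bruhat_step w w' ->
  nth 0 w' (size w).-1 <= nth 0 w (size w).-1.
Proof.
case=> i [j [ij jw lt_ij ->]]; rewrite nth_swap_seq; last lia.
rewrite ifN_eq; last by apply/eqP; lia.
by case: eqP => [->|_]; [apply: ltW | apply: lexx].
Qed.

Lemma bruhat_perm w w' : clos_trans _ bruhat_step w w' -> perm_eq w w'.
Proof.
elim=> [x y /bruhat_step_perm // | x y z _ pxy _ pyz]; exact: perm_trans pxy pyz.
Qed.

Lemma bruhat_count_take w w' (c : int) p : clos_trans _ bruhat_step w w' ->
  (count (>= c) (take p w) <= count (>= c) (take p w'))%N.
Proof.
elim=> [x y /bruhat_step_count_take // | x y z _ cxy _ cyz]; exact: leq_trans cxy cyz.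
Qed.

Lemma bruhat_last w w' : clos_trans _ bruhat_step w w' ->
  nth 0 w' (size w).-1 <= nth 0 w (size w).-1.
Proof.
elim=> [x y /bruhat_step_last // | x y z xy lxy _ lyz].
rewrite (perm_size (bruhat_perm xy)) in lxy *; exact: le_trans lyz lxy.
Qed.

Lemma bruhat_lt_last m k (f g : idx m k.+1) :
  bruhat_lt g f -> nth 0 (val f).2 k <= nth 0 (val g).2 k.
Proof.
case/and4P: (valP f) (valP g) => /eqP sz_f1 _ _ _ /and4P[/eqP sz_g1 /eqP sz_g2 _ _].
move/bruhat_last; rewrite /as_fun size_cat sz_g1 sz_g2 addnS /= !nth_cat sz_g1 sz_f1.
by rewrite ltnNge leq_addr /= addKn.
Qed.

(** * Strictly decreasing sequences and separated pairs *)

Lemma sdec_uniq s : sdec s -> uniq s.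
Proof. by apply: sorted_uniq; [apply: rev_trans; apply: lt_trans | apply: ltxx]. Qed.

Lemma sdec_rcons t z : sdec (rcons t z) = all (> z) t && sdec t.
Proof.
rewrite /sdec -rev_sorted rev_rcons /= (path_sortedE lt_trans) all_rev.
by rewrite rev_sorted.
Qed.

Definition separated (s t : seq int) : Prop :=
  forall x y, x \in s -> x \notin t -> y \in t -> x < y.

Lemma separated_subset s t s' t' :
  uniq s -> uniq t -> uniq s' -> uniq t' -> perm_eq (s' ++ t') (s ++ t) ->
  (forall c, count (>= c) s' <= count (>= c) s)%N -> separated s t ->
  {subset s' <= s}.
Proof.
move=> us ut us' ut' pe dom sep b bs'; apply/negPn/negP => bs.
have mem_st a : ((a \in s') + (a \in t') = (a \in s) + (a \in t))%N.
  rewrite -(count_uniq_mem a us') -(count_uniq_mem a ut') -(count_uniq_mem a us).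
  by rewrite -(count_uniq_mem a ut) -!count_cat (permP pe).
have bt : b \in t by have := mem_st b; rewrite bs' (negbTE bs); case: (b \in t).
have sub : {subset b :: filter (>= b) s <= filter (>= b) s'}.
  move=> a; rewrite inE !mem_filter => /predU1P[->|/andP[ba as_]].
    by rewrite lexx.
  rewrite ba /=; apply/negPn/negP => as'.
  have at_ : a \notin t.
    by apply/negP => at_; have := mem_st a; rewrite as_ at_ (negbTE as'); case: (a \in t').
  by have := sep a b as_ at_ bt; rewrite ltNge ba.
have := uniq_leq_size _ sub; rewrite /= mem_filter (negbTE bs) andbF filter_uniq //.
by rewrite !size_filter => /(_ isT); rewrite ltnNge dom.
Qed.

Lemma separated_rearrangement s t s' t' :
  sdec s -> sdec t -> sdec s' -> sdec t' -> size s' = size s ->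
  perm_eq (s' ++ t') (s ++ t) -> (forall c : int, count (>= c) s' <= count (>= c) s)%N ->
  separated s t -> s' = s /\ t' = t.
Proof.
move=> ds dt ds' dt' sz pe dom sep.
have sub := separated_subset (sdec_uniq ds) (sdec_uniq dt) (sdec_uniq ds') (sdec_uniq dt')
  pe dom sep.
have [_ eq_s] := uniq_min_size (sdec_uniq ds') sub (eq_leq (esym sz)).
have gt_trans := rev_trans (@lt_trans _ int).
have es : s' = s by apply: (irr_sorted_eq gt_trans ltxx ds' ds).
subst s'; split=> //; apply: (irr_sorted_eq gt_trans ltxx dt' dt).
by apply: perm_mem; rewrite -(perm_cat2l s).
Qed.

Lemma bruhat_separated_eq s t s' t' r :
  sdec s -> sdec t -> sdec s' -> sdec t' -> size s' = size s -> separated s t ->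
  clos_trans _ bruhat_step (s' ++ t' ++ r) (s ++ t ++ r) -> s' = s /\ t' = t.
Proof.
move=> ds dt ds' dt' sz sep lt_st; apply: separated_rearrangement => //.
  by rewrite -(perm_cat2r r) -!catA (bruhat_perm lt_st).
move=> c; have := bruhat_count_take c (size s) lt_st.
by rewrite -{1}sz !take_size_cat.
Qed.

Lemma exists_gap_below (t : seq int) x y : x \notin t -> y \in t -> y < x ->
  exists2 y', y' \in t & (y' + 1 \notin t) && (y' < x).
Proof.
move=> xt; have [d] := ubnP `|x - y|%N; elim: d y => // d IH y lt_d yt yx.
have [y1t|y1t] := boolP (y + 1 \in t); last by exists y; rewrite ?y1t.
have /eqP y1x : y + 1 != x by apply: contraNneq xt => <-.
by apply: (IH (y + 1)) => //; lia.
Qed.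

Lemma separated_or_gap s t : separated s t \/
  exists x y, [/\ x \in s, y \in t, y + 1 \notin t & y < x].
Proof.
have [/hasP[x xs /hasP[y yt /andP[y1t yx]]]|no_gap] :=
  boolP (has (fun x => has (fun y => (y + 1 \notin t) && (y < x)) t) s).
  by right; exists x, y.
left=> x y xs xt yt; rewrite ltNge; apply/negP => yx.
have yx' : y < x by rewrite lt_neqAle yx andbT; apply: contraNneq xt => <-.
have [y' y't gap] := exists_gap_below xt yt yx'.
by apply: (negP no_gap); apply/hasP; exists x => //; apply/hasP; exists y'.
Qed.

Lemma separated_bruhat_minimal m k (f g : idx m k) s t s' t' r :
  val f = (s, t ++ r) -> val g = (s', t' ++ r) -> separated s t -> bruhat_lt g f -> g = f.
Proof.
move=> ef eg sep; rewrite /bruhat_lt /as_fun ef eg /= => lt_gf.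
case/and4P: (valP f); rewrite ef /= => /eqP sz_s _ ds /cat_sorted2[dt _].
case/and4P: (valP g); rewrite eg /= => /eqP sz_s' _ ds' /cat_sorted2[dt' _].
have sz : size s' = size s by rewrite sz_s sz_s'.
apply: val_inj; rewrite ef eg.
by have [-> ->] := bruhat_separated_eq ds dt ds' dt' sz sep lt_gf.
Qed.

(** * The operators E_a on index sequences *)

Definition relabel (v w z : int) : int := if z == v then w else z.

Lemma sdec_relabel v w t : sdec t -> w \notin t -> w = v + 1 \/ w = v - 1 ->
  sdec (map (relabel v w) t).
Proof.
move=> dt wt adj; rewrite /sdec sorted_map.
apply: (sub_in_sorted (P := mem t)) dt; last exact: allss.
move=> a b at_ bt /= ba; rewrite /relabel.
have /eqP aw : a != w by apply: contraNneq wt => <-.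
have /eqP bw : b != w by apply: contraNneq wt => <-.
by case: eqP => av; case: eqP => bv; lia.
Qed.

Lemma E_seq_Some a s s2 : E_seq a s = Some s2 ->
  [/\ a + 1 \in s, a \notin s & s2 = map (relabel (a + 1) a) s].
Proof. by rewrite /E_seq; case: ifP => // /andP[? ?] [<-]. Qed.

Lemma size_E_seq a s s2 : E_seq a s = Some s2 -> size s2 = size s.
Proof. by case/E_seq_Some => _ _ ->; rewrite size_map. Qed.

Lemma sdec_E_seq a s s2 : sdec s -> E_seq a s = Some s2 -> sdec s2.
Proof. by move=> ds /E_seq_Some[_ as_ ->]; apply: sdec_relabel => //; right; lia. Qed.

Lemma E_seq_relabel y t : y \in t -> y + 1 \notin t ->
  E_seq y (map (relabel y (y + 1)) t) = Some t.
Proof.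
move=> yt y1t; rewrite /E_seq.
have -> : y + 1 \in map (relabel y (y + 1)) t.
  by apply/mapP; exists y => //; rewrite /relabel eqxx.
have -> : y \notin map (relabel y (y + 1)) t.
  apply/mapP => -[z _]; rewrite /relabel; case: eqP => [_|zy] yz; first lia.
  by apply: zy; rewrite yz.
congr Some; rewrite -map_comp -[RHS]map_id; apply/eq_in_map => z zt /=.
rewrite /relabel; case: (z =P y) => [->|_]; first by rewrite !eqxx.
by case: (z =P y + 1) => // zy1; rewrite -zy1 zt in y1t.
Qed.

Lemma E_seq_rcons a t z : z != a -> z != a + 1 ->
  E_seq a (rcons t z) = omap (rcons^~ z) (E_seq a t).
Proof.
move=> za za1; rewrite /E_seq !mem_rcons !in_cons [a + 1 == z]eq_sym [a == z]eq_sym.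
by rewrite (negbTE za) (negbTE za1); case: ifP => //= _; rewrite map_rcons (negbTE za1).
Qed.

Lemma kexp_rcons a t z : z != a -> z != a + 1 -> kexp a (rcons t z) = kexp a t.
Proof.
move=> za za1; rewrite /kexp !mem_rcons !in_cons [a + 1 == z]eq_sym [a == z]eq_sym.
by rewrite (negbTE za) (negbTE za1).
Qed.

(** * The induction weight *)

Definition excess (x z : int) : nat := if z < x then `|x - z|%N else 0.

Definition gap_weight (s t : seq int) : nat := \sum_(x <- s) \sum_(z <- t) excess x z.

Lemma leq_excess_r x z z' : z <= z' -> (excess x z' <= excess x z)%N.
Proof. by rewrite /excess => ?; case: ifP => ?; case: ifP => ?; lia. Qed.

Lemma leq_excess_l x x' z : x' <= x -> (excess x' z <= excess x z)%N.
Proof. by rewrite /excess => ?; case: ifP => ?; case: ifP => ?; lia. Qed.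

Lemma ltn_excess_succ x y : y < x -> (excess x (y + 1) < excess x y)%N.
Proof. by rewrite /excess => ?; case: ifP => ?; case: ifP => ?; lia. Qed.

Lemma ltn_sum_seq (T : eqType) (r : seq T) (F G : T -> nat) x0 :
  uniq r -> x0 \in r -> (forall x, x \in r -> F x <= G x)%N -> (F x0 < G x0)%N ->
  (\sum_(x <- r) F x < \sum_(x <- r) G x)%N.
Proof.
move=> ur xr le_FG lt_FG.
rewrite (bigD1_seq x0 xr ur) [X in (_ < X)%N](bigD1_seq x0 xr ur) /=.
rewrite -addSn leq_add //; rewrite big_seq_cond [X in (_ <= X)%N]big_seq_cond.
by apply: leq_sum => x /andP[/le_FG].
Qed.

Lemma gap_weight_raise s t x y : uniq s -> uniq t -> x \in s -> y \in t -> y < x ->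
  (gap_weight s (map (relabel y (y + 1)) t) < gap_weight s t)%N.
Proof.
move=> us ut xs yt yx; rewrite /gap_weight.
have le_relabel z : z <= relabel y (y + 1) z by rewrite /relabel; case: eqP => // ->; lia.
apply: (ltn_sum_seq us xs) => [x' _|]; rewrite big_map.
  by apply: leq_sum => z _; apply: leq_excess_r.
apply: (ltn_sum_seq ut yt) => [z _|]; first exact: leq_excess_r.
by rewrite /relabel eqxx; apply: ltn_excess_succ.
Qed.

Lemma gap_weight_lower s t y :
  (gap_weight (map (relabel (y + 1) y) s) t <= gap_weight s t)%N.
Proof.
rewrite /gap_weight big_map; apply: leq_sum => x _; apply: leq_sum => z _.
by apply: leq_excess_l; rewrite /relabel; case: eqP => // ->; lia.
Qed.

(** * Linear extension and bar involutions *)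

Lemma malgE m k (u : Esp m k) : u = \sum_(f <- msupp u) u@_f *: Kb f.
Proof.
rewrite [LHS]monalgE; apply: eq_bigr => f _; apply/malgP => g.
by rewrite [LHS]mcoeffU mcoeffZ [X in _ * X]mcoeffU mulr_natr.
Qed.

Section LinearExtension.
Context {m k m' k' : nat} (b : idx m k -> Esp m' k').

Lemma lin_extEw (u : Esp m k) (d : {fset idx m k}) :
  (msupp u `<=` d)%fset -> lin_ext b u = \sum_(i <- d) u@_i *: b i.
Proof.
move=> le_ud; rewrite /lin_ext (big_fset_incl _ le_ud) // => x _ /mcoeff_outdom ->.
by rewrite scale0r.
Qed.

Lemma lin_ext_is_linear : linear (lin_ext b).
Proof.
move=> c u v; pose d := (msupp u `|` msupp v)%fset.
have le_d : (msupp (c *: u + v) `<=` d)%fset.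
  by apply: fsubset_trans (msuppD_le _ _) _; apply: fsetSU; exact: msuppZ_le.
rewrite (lin_extEw le_d) (lin_extEw (fsubsetUl _ (msupp v))).
rewrite (lin_extEw (fsubsetUr (msupp u) _)) scaler_sumr -big_split /=.
by apply: eq_bigr => i _; rewrite mcoeffD mcoeffZ scalerDl scalerA.
Qed.

HB.instance Definition _ :=
  GRing.isLinear.Build Qq (Esp m k) (Esp m' k') *:%R (lin_ext b) lin_ext_is_linear.

Lemma linear_lin_ext (V : lmodType Qq) (L : {linear Esp m' k' -> V}) u :
  L (lin_ext b u) = \sum_(f <- msupp u) u@_f *: L (b f).
Proof. by rewrite linear_sum; apply: eq_bigr => f _; rewrite linearZ. Qed.

Lemma lin_extU (f : idx m k) : lin_ext b (Kb f) = b f.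
Proof. by rewrite /lin_ext msuppU oner_eq0 big_seq_fset1 mcoeffUU scale1r. Qed.

End LinearExtension.

HB.instance Definition _ m n := GRing.Linear.on (@Tr m n).
HB.instance Definition _ m k a := GRing.Linear.on (@actE m k a).

Section BasisVectors.
Context {m k : nat}.

Lemma mkbK st (wf_st : wf m k st) : mkb m k st = Kb (Sub st wf_st : idx m k).
Proof. by rewrite /mkb insubT. Qed.

Lemma mkb_nwf st : ~~ wf m k st -> mkb m k st = 0.
Proof. by move=> nwf_st; rewrite /mkb insubN. Qed.

Lemma mkb_val (f : idx m k) : mkb m k (val f) = Kb f.
Proof. by rewrite (mkbK (valP f)); congr Kb; apply: val_inj; rewrite SubK. Qed.

Lemma actE_mkb a s t : wf m k (s, t) -> actE a (mkb m k (s, t)) =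
  (if E_seq a t is Some t2 then mkb m k (s, t2) else 0) +
  (if E_seq a s is Some s2 then qq ^ (- kexp a t) *: mkb m k (s2, t) else 0).
Proof. by move=> wf_st; rewrite (mkbK wf_st) /actE lin_extU /actE_b SubK. Qed.

Lemma wf_rcons s t z : wf m k.+1 (s, rcons t z) = wf m k (s, t) && all (> z) t.
Proof.
by rewrite /wf /= size_rcons eqSS sdec_rcons; case: (all _ _); rewrite /= ?andbT ?andbF.
Qed.

Lemma wf_relabel s t v w : wf m k (s, t) -> w \notin t -> w = v + 1 \/ w = v - 1 ->
  wf m k (s, map (relabel v w) t).
Proof.
by case/and4P=> sz_s sz_t ds dt wt adj; apply/and4P; rewrite /= size_map sdec_relabel.
Qed.

Lemma wf_E_seq_l a s s2 t : wf m k (s, t) -> E_seq a s = Some s2 -> wf m k (s2, t).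
Proof.
case/and4P=> sz_s sz_t ds dt Es; apply/and4P.
by rewrite /= (size_E_seq Es) (sdec_E_seq ds Es).
Qed.

Lemma wf_E_seq_r a s t t2 : wf m k (s, t) -> E_seq a t = Some t2 -> wf m k (s, t2).
Proof.
case/and4P=> sz_s sz_t ds dt Et; apply/and4P.
by rewrite /= (size_E_seq Et) (sdec_E_seq dt Et).
Qed.

Lemma actE_mkb_relabel s t y : wf m k (s, t) -> y \in t -> y + 1 \notin t ->
  actE y (mkb m k (s, map (relabel y (y + 1)) t)) = mkb m k (s, t) +
  (if E_seq y s is Some s2 then
     qq ^ (- kexp y (map (relabel y (y + 1)) t)) *: mkb m k (s2, map (relabel y (y + 1)) t)
   else 0).
Proof.
move=> hw yt y1t; rewrite actE_mkb ?E_seq_relabel //.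
by apply: wf_relabel => //; left.
Qed.

End BasisVectors.

Section BarInvolution.
Context {m k : nat} (psi : Esp m k -> Esp m k).
Hypothesis bar_psi : is_bar_involution psi.

Lemma bar_scale_add c u v : psi (c *: u + v) = barQ c *: psi u + psi v.
Proof. by case: bar_psi. Qed.

Lemma barK : involutive psi.
Proof. by case: bar_psi => _ []. Qed.

Lemma bar0 : psi 0 = 0.
Proof.
have := bar_scale_add 1 (psi 0) 0.
by rewrite scale1r addr0 barK scaler0 add0r => /esym.
Qed.

Lemma bar_sum (I : Type) (r : seq I) (c : I -> Qq) (x : I -> Esp m k) :
  psi (\sum_(i <- r) c i *: x i) = \sum_(i <- r) barQ (c i) *: psi (x i).
Proof.
elim: r => [|i r IH]; first by rewrite [in LHS]big_nil [RHS]big_nil bar0.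
by rewrite [in LHS]big_cons [RHS]big_cons bar_scale_add IH.
Qed.

Lemma bar_actE a u : psi (actE a u) = actE a (psi u).
Proof. by case: bar_psi => _ [_ []]. Qed.

Lemma bar_coef_diag f : (psi (Kb f))@_f = 1.
Proof. by case: bar_psi => _ [_ [_ [_ [_ [_ /(_ f f) [_ [-> //]]]]]]]. Qed.

Lemma bar_coef_lower f g : g != f -> (psi (Kb f))@_g != 0 -> bruhat_lt g f.
Proof.
case: bar_psi => _ [_ [_ [_ [_ [_ /(_ f g) [_ [_ lower]]]]]]] /eqP gf.
exact: lower.
Qed.

Lemma bar_Kb_minimal f : (forall g, bruhat_lt g f -> g = f) -> psi (Kb f) = Kb f.
Proof.
move=> minf; apply/malgP => g; rewrite mcoeffU.
have [<-|gf] := eqVneq f g; first by rewrite bar_coef_diag.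
apply/eqP; apply: contraT => nz.
suff /minf gf' : bruhat_lt g f by rewrite gf' eqxx in gf.
by apply: bar_coef_lower => //; rewrite eq_sym.
Qed.

(* By unitriangularity only the diagonal coefficient of psi (Kb f) survives. *)
Lemma lin_ext_bar_Kb m' k' (b : idx m k -> Esp m' k') f :
  (forall g, g != f -> bruhat_lt g f -> b g = 0) ->
  lin_ext b (psi (Kb f)) = lin_ext b (Kb f).
Proof.
move=> b_lower; have f_supp : f \in msupp (psi (Kb f)).
  by rewrite -mcoeff_neq0 bar_coef_diag oner_eq0.
rewrite lin_extU /lin_ext (big_fsetD1 f f_supp) /= bar_coef_diag scale1r.
rewrite big1_fset ?addr0 // => g; rewrite in_fsetD1 => /andP[gf g_supp] _.
by rewrite b_lower ?scaler0 //; apply: bar_coef_lower; rewrite // mcoeff_neq0.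
Qed.

End BarInvolution.

(** * Truncation *)

Lemma rcons_take_nth (t : seq int) n : size t = n.+1 -> t = rcons (take n t) (nth 0 t n).
Proof. by move=> sz_t; rewrite -take_nth ?sz_t // -sz_t take_size. Qed.

Section Truncation.
Context {m n : nat}.

Lemma Tr_Kb (f : idx m n.+1) : Tr (Kb f) = tr_b f.
Proof. exact: lin_extU. Qed.

Lemma Tr_mkb_rcons s t : wf m n.+1 (s, rcons t (- n%:Z)) ->
  Tr (mkb m n.+1 (s, rcons t (- n%:Z))) = mkb m n (s, t).
Proof.
move=> hw; have sz_t : size t = n by case/and4P: hw => _; rewrite size_rcons => /eqP[].
by rewrite (mkbK hw) Tr_Kb /tr_b SubK /= nth_rcons sz_t ltnn !eqxx -cats1 take_size_cat.
Qed.

Lemma Tr_mkb_last_neq s t : nth 0 t n != - n%:Z -> Tr (mkb m n.+1 (s, t)) = 0.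
Proof.
move=> ln; have [hw|nhw] := boolP (wf m n.+1 (s, t)); last by rewrite mkb_nwf ?linear0.
by rewrite (mkbK hw) Tr_Kb /tr_b SubK /= (negbTE ln).
Qed.

Lemma Tr_actE_mkb_rcons y s t : - n%:Z < y -> wf m n.+1 (s, rcons t (- n%:Z)) ->
  Tr (actE y (mkb m n.+1 (s, rcons t (- n%:Z)))) = actE y (mkb m n (s, t)).
Proof.
move=> gt_y hw; have := hw; rewrite wf_rcons => /andP[hw' _].
have ny : - n%:Z != y by rewrite lt_eqF.
have ny1 : - n%:Z != y + 1 by apply/eqP; lia.
rewrite (actE_mkb _ hw) (actE_mkb _ hw') E_seq_rcons // kexp_rcons // linearD.
congr (_ + _).
  case Et: (E_seq y t) => [t2|] /=; last exact: linear0.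
  by apply: Tr_mkb_rcons; apply: (wf_E_seq_r (a := y) hw); rewrite E_seq_rcons // Et.
case Es: (E_seq y s) => [s2|]; last exact: linear0.
by rewrite linearZ; congr (_ *: _); apply: Tr_mkb_rcons; apply: wf_E_seq_l Es.
Qed.

Lemma Tr_actE_mkb_off y s t : - n%:Z < y -> nth 0 t n != - n%:Z ->
  Tr (actE y (mkb m n.+1 (s, t))) = actE y (Tr (mkb m n.+1 (s, t))).
Proof.
move=> gt_y ln; rewrite Tr_mkb_last_neq // linear0.
have [hw|nhw] := boolP (wf m n.+1 (s, t)); last by rewrite mkb_nwf ?linear0.
have sz_t : size t = n.+1 by case/and4P: hw => _ /eqP.
have Tr_Et : Tr (if E_seq y t is Some t2 then mkb m n.+1 (s, t2) else 0) = 0.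
  case Et: (E_seq y t) => [t2|]; last exact: linear0.
  case/E_seq_Some: Et => _ _ ->; apply: Tr_mkb_last_neq.
  by rewrite (nth_map 0) ?sz_t // /relabel; case: (_ =P y + 1) => // _; rewrite gt_eqF.
rewrite (actE_mkb _ hw) linearD /= Tr_Et add0r.
by case: (E_seq y s) => [s2|]; rewrite ?linearZ /= ?Tr_mkb_last_neq ?scaler0 ?linear0.
Qed.

Lemma Tr_actE_Kb y (f : idx m n.+1) : - n%:Z < y -> Tr (actE y (Kb f)) = actE y (Tr (Kb f)).
Proof.
move=> gt_y; rewrite -mkb_val; case: f => [[s t] hf] /=.
have [ln|ln] := eqVneq (nth 0 t n) (- n%:Z); last exact: Tr_actE_mkb_off.
have sz_t : size t = n.+1 by case/and4P: hf => _ /eqP.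
rewrite (rcons_take_nth sz_t) ln in hf *.
by rewrite (Tr_actE_mkb_rcons gt_y hf) (Tr_mkb_rcons hf).
Qed.

Lemma Tr_actE y (u : Esp m n.+1) : - n%:Z < y -> Tr (actE y u) = actE y (Tr u).
Proof.
move=> gt_y; rewrite [LHS]linear_lin_ext [RHS]linear_lin_ext.
apply: eq_bigr => f _; congr (_ *: _).
rewrite -[actE_b y f](lin_extU (actE_b y)) -[tr_b f](lin_extU (@tr_b m n)).
exact: Tr_actE_Kb.
Qed.

End Truncation.

Section TruncationBar.
Context {m n : nat} (psi1 : Esp m n.+1 -> Esp m n.+1) (psi2 : Esp m n -> Esp m n).
Hypotheses (bar1 : is_bar_involution psi1) (bar2 : is_bar_involution psi2).

Lemma Tr_bar_actE y c u u' u'' v v' v'' : - n%:Z < y ->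
  actE y u' = u + c *: u'' -> actE y v' = v + c *: v'' ->
  Tr (psi1 u') = psi2 v' -> Tr (psi1 u'') = psi2 v'' -> Tr (psi1 u) = psi2 v.
Proof.
move=> gt_y Eu Ev e' e''.
have -> : u = (- c) *: u'' + actE y u' by rewrite Eu scaleNr addrC addrK.
have -> : v = (- c) *: v'' + actE y v' by rewrite Ev scaleNr addrC addrK.
rewrite (bar_scale_add bar1) (bar_scale_add bar2) linearD linearZ /= e''.
by rewrite (bar_actE bar1) (bar_actE bar2) (Tr_actE _ gt_y) e'.
Qed.

Lemma Tr_bar_separated s t : separated s t -> wf m n.+1 (s, rcons t (- n%:Z)) ->
  Tr (psi1 (mkb m n.+1 (s, rcons t (- n%:Z)))) = psi2 (mkb m n (s, t)).
Proof.
move=> sep hF; have := hF; rewrite wf_rcons => /andP[hf _].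
have bar2_fix : psi2 (Kb (Sub (s, t) hf)) = Kb (Sub (s, t) hf).
  apply: (bar_Kb_minimal bar2) => g lt_g.
  apply: (separated_bruhat_minimal (s' := (val g).1) (t' := (val g).2) (r := [::])
            _ _ sep lt_g).
    by rewrite SubK cats0.
  by rewrite cats0; case: (val g).
have Tr_bar1 : Tr (psi1 (mkb m n.+1 (s, rcons t (- n%:Z)))) =
               Tr (mkb m n.+1 (s, rcons t (- n%:Z))).
  rewrite (mkbK hF) /Tr (lin_ext_bar_Kb bar1) // => g gF lt_gF; rewrite /tr_b.
  case: eqP => // last_g; case/eqP: gF.
  have sz_g : size (val g).2 = n.+1 by case/and4P: (valP g) => _ /eqP.
  apply: (separated_bruhat_minimal (s' := (val g).1) (t' := take n (val g).2)
            (r := [:: - n%:Z]) _ _ sep lt_gF).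
    by rewrite SubK cats1.
  by rewrite cats1 -last_g -(rcons_take_nth sz_g); case: (val g).
by rewrite Tr_bar1 (Tr_mkb_rcons hF) (mkbK hf) bar2_fix.
Qed.

Lemma Tr_bar_rcons s t : wf m n.+1 (s, rcons t (- n%:Z)) ->
  Tr (psi1 (mkb m n.+1 (s, rcons t (- n%:Z)))) = psi2 (mkb m n (s, t)).
Proof.
have [d] := ubnP (gap_weight s t); elim: d s t => // d IH s t lt_d hF.
have [sep|[x [y [xs yt y1t yx]]]] := separated_or_gap s t; first exact: Tr_bar_separated.
have := hF; rewrite wf_rcons => /andP[hf /allP gt_t].
have gt_y : - n%:Z < y := gt_t y yt.
have /andP[us ut] : uniq s && uniq t by case/and4P: hf => _ _ /sdec_uniq -> /sdec_uniq ->.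
have ny : - n%:Z != y by rewrite lt_eqF.
have ny1 : - n%:Z != y + 1 by apply/eqP; lia.
have relabel_n : relabel y (y + 1) (- n%:Z) = - n%:Z by rewrite /relabel (negbTE ny).
have y1tn : y + 1 \notin rcons t (- n%:Z) by rewrite mem_rcons inE negb_or eq_sym ny1.
have ytn : y \in rcons t (- n%:Z) by rewrite mem_rcons inE yt orbT.
have raise1 := actE_mkb_relabel hF ytn y1tn.
rewrite map_rcons relabel_n in raise1.
have raise2 := actE_mkb_relabel hf yt y1t.
set t' := map (relabel y (y + 1)) t in raise1 raise2.
have hF' : wf m n.+1 (s, rcons t' (- n%:Z)).
  by rewrite -relabel_n -map_rcons; apply: wf_relabel hF y1tn _; left.
have lt' : (gap_weight s t' < d)%N.
  exact: leq_trans (gap_weight_raise us ut xs yt yx) (ltnSE lt_d).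
have IH' := IH s t' lt' hF'.
rewrite kexp_rcons // in raise1.
case Es: (E_seq y s) => [s2|] in raise1 raise2.
  have hF'' : wf m n.+1 (s2, rcons t' (- n%:Z)) := wf_E_seq_l hF' Es.
  have lt'' : (gap_weight s2 t' < d)%N.
    by case/E_seq_Some: Es => _ _ ->; exact: leq_ltn_trans (gap_weight_lower _ _ _) lt'.
  exact: (Tr_bar_actE gt_y raise1 raise2 IH' (IH _ _ lt'' hF'')).
rewrite -(scale0r (mkb m n.+1 (s, rcons t' (- n%:Z)))) in raise1.
rewrite -(scale0r (mkb m n (s, t'))) in raise2.
exact: (Tr_bar_actE gt_y raise1 raise2 IH' IH').
Qed.

Lemma Tr_bar_Kb_off (f : idx m n.+1) :
  - n%:Z < nth 0 (val f).2 n -> Tr (psi1 (Kb f)) = 0.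
Proof.
move=> gt_f; rewrite /Tr (lin_ext_bar_Kb bar1) => [|g _ /bruhat_lt_last le_fg].
  by rewrite lin_extU /tr_b gt_eqF.
by rewrite /tr_b gt_eqF // (lt_le_trans gt_f le_fg).
Qed.

Lemma Tr_bar_Kb f : plus_idx f -> Tr (psi1 (Kb f)) = psi2 (Tr (Kb f)).
Proof.
rewrite /plus_idx /= => ge_f.
have [ln|ln] := eqVneq (nth 0 (val f).2 n) (- n%:Z); last first.
  have gt_f : - n%:Z < nth 0 (val f).2 n by rewrite lt_neqAle eq_sym ln /=; lia.
  by rewrite Tr_bar_Kb_off // Tr_Kb /tr_b (negbTE ln) (bar0 bar2).
rewrite -mkb_val; case: f ln {ge_f} => [[s t] hw] /= ln.
have sz_t : size t = n.+1 by case/and4P: hw => _ /eqP.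
rewrite (rcons_take_nth sz_t) ln in hw *.
by rewrite (Tr_mkb_rcons hw) (Tr_bar_rcons hw).
Qed.

End TruncationBar.

Theorem proposition4p29 (m n : nat)
    (psi1 : Esp m n.+1 -> Esp m n.+1) (psi2 : Esp m n -> Esp m n) :
  is_bar_involution psi1 -> is_bar_involution psi2 ->
  forall u : Esp m n.+1, in_Eplus u -> Tr (psi1 u) = psi2 (Tr u).
Proof.
move=> bar1 bar2 u hu.
rewrite [in LHS](malgE u) (bar_sum bar1) linear_sum.
rewrite -[Tr u]/(\sum_(f <- msupp u) u@_f *: tr_b f) (bar_sum bar2).
apply: eq_big_seq => f f_supp.
by rewrite linearZ /= (Tr_bar_Kb bar1 bar2 (hu f f_supp)) Tr_Kb.
Qed.
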